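(* If a graph $G$ has three distinct cutvertices lying in the same connected component of $G$, then $G$ does not belong to DH $\cap$ co-DH.
   Context: All graphs are finite and simple. A cutvertex is a vertex whose deletion increases the number of connected components. A graph is distance-hereditary if it has no induced subgraph isomorphic to a hole (an induced cycle of length at least $5$), the house (a $5$-cycle plus one chord), the domino (a $6$-cycle $v_1\dots v_6$ plus the chord $v_1v_4$), or the gem ($P_4$ plus a vertex adjacent to all four of its vertices). DH $\cap$ co-DH is the class of graphs $G$ such that both $G$ and its complement are distance-hereditary. *)

From mathcomp Require Import all_boot.
Set Implicit Arguments. Unset Strict Implicit. Unset Printing Implicit Defensive.

(* A finite simple graph: vertex type T : finType, adjacency e : rel T,
   assumed symmetric and irreflexive in the theorem. *)

Definition connect_in (T : finType) (e : rel T) (S : {set T}) : rel T :=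
  connect (fun a b => [&& a \in S, b \in S & e a b]).

Definition components (T : finType) (e : rel T) (S : {set T}) : {set {set T}} :=
  [set [set y in S | connect_in e S x y] | x in S].

Definition ncomp (T : finType) (e : rel T) (S : {set T}) : nat :=
  #|components e S|.

Definition cutvertex (T : finType) (e : rel T) (v : T) : bool :=
  ncomp e [set: T] < ncomp e [set~ v].

Definition compl_rel (T : finType) (e : rel T) : rel T :=
  fun x y => (x != y) && ~~ e x y.

Definition has_induced (U T : finType) (h : rel U) (e : rel T) : Prop :=
  exists f : U -> T, injective f /\ forall a b, h a b = e (f a) (f b).

Definition cycle_rel (n : nat) : rel 'I_n :=
  fun i j => (val j == (val i).+1 %% n) || (val i == (val j).+1 %% n).

Definition edge_is (n a b : nat) : rel 'I_n :=
  fun i j => ((val i == a) && (val j == b)) || ((val i == b) && (val j == a)).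

Definition house_rel : rel 'I_5 :=
  fun i j => @cycle_rel 5 i j || edge_is 1 4 i j.

Definition domino_rel : rel 'I_6 :=
  fun i j => @cycle_rel 6 i j || edge_is 0 3 i j.

Definition gem_rel : rel 'I_5 :=
  fun i j => [|| edge_is 0 1 i j, edge_is 1 2 i j, edge_is 2 3 i j,
                 ((val i == 4) && (val j != 4)) | ((val j == 4) && (val i != 4))].

Definition distance_hereditary (T : finType) (e : rel T) : Prop :=
  (forall n, 5 <= n -> ~ has_induced (@cycle_rel n) e) /\
  ~ has_induced house_rel e /\
  ~ has_induced domino_rel e /\
  ~ has_induced gem_rel e.

From mathcomp Require Import all_boot.
Set Implicit Arguments. Unset Strict Implicit. Unset Printing Implicit Defensive.

(* A cutvertex s has, for every vertex v, a neighbour x that G - s separates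
   from v; x is then non-adjacent to every vertex other than s that G - s joins
   to v.  Hence an induced path s p q r starting at a cutvertex extends to an
   induced P5 x s p q r, whose complement is the house.  If two of the three
   cutvertices, s and t, are non-adjacent, such a path exists: s p t x with x a
   neighbour of t separated from s when dist(s, t) = 2, and the first vertices
   of a shortest path from s when dist(s, t) >= 3.  If the three cutvertices are
   pairwise adjacent, the neighbours x_u, x_v, x_w chosen in this way give an
   induced P4 x_u u v x_v plus the isolated vertex x_w, whose complement is the
   gem. *)

Lemma leq_card_imset_coarse (T U V : finType) (f : T -> U) (g : T -> V)
    (A : {set T}) :
  {in A &, forall x y, g x = g y -> f x = f y} -> #|f @: A| <= #|g @: A|.
Proof.
move=> gf; have [->|[x0 _]] := set_0Vmem A; first by rewrite !imset0 !cards0.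
pose h z := f (odflt x0 [pick x in A | g x == z]).
suff -> : f @: A = h @: (g @: A) by apply: leq_imset_card.
rewrite -imset_comp; apply: eq_in_imset => x xA; rewrite /h /=.
case: pickP => [y /andP[yA /eqP gyx]|/(_ x)]; first exact: gf.
by rewrite xA eqxx.
Qed.

Lemma connect_exit (T : finType) (r : rel T) (A : {pred T}) a b :
  connect r a b -> a \in A -> b \notin A ->
  exists x y, [/\ x \in A, y \notin A & r x y].
Proof.
case/connectP=> p + ->; elim: p a => [|y p IH] a /=; first by move=> _ ->.
case/andP=> ay pth aA; have [yA|yA] := boolP (y \in A); first exact: IH.
by exists a, y.
Qed.

Section Graph.
Variables (T : finType) (e : rel T).
Hypotheses (se : symmetric e) (ie : irreflexive e).

Lemma adj_neq x y : e x y -> x != y.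
Proof. by apply: contraTneq => ->; rewrite ie. Qed.

Lemma connect_in_sym (S : {set T}) :
  connect_sym (fun a b => [&& a \in S, b \in S & e a b]).
Proof. by apply: sym_connect_sym => a b; rewrite andbCA se. Qed.

Lemma connect_in_edge (S : {set T}) x y :
  x \in S -> y \in S -> e x y -> connect_in e S x y.
Proof. by move=> xS yS exy; apply: connect1; rewrite /= xS yS. Qed.

Lemma connect_in_closed (S : {set T}) a x :
  connect_in e S a x -> a \in S -> x \in S.
Proof. by move=> ax; rewrite -(closed_connect _ ax) // => y z /and3P[-> ->]. Qed.

Lemma connect_in_setT x y : connect_in e [set: T] x y = connect e x y.
Proof. by apply: eq_connect => a b; rewrite !in_setT. Qed.

Lemma disconnected_neq (S : {set T}) x y : ~~ connect_in e S x y -> x != y.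
Proof. by apply: contraNneq => ->; apply: connect0. Qed.

Lemma cutvertex_splits u : cutvertex e u ->
  exists a b, [/\ a \in [set~ u], b \in [set~ u], connect e a b
                & ~~ connect_in e [set~ u] a b].
Proof.
move=> cut_u.
suff /existsP[a /existsP[b /and4P[]]] : [exists a, exists b,
    [&& a \in [set~ u], b \in [set~ u], connect e a b
      & ~~ connect_in e [set~ u] a b]] by exists a, b.
apply: contraLR cut_u => /existsPn split_none.
rewrite /cutvertex /ncomp /components -leqNgt.
pose compT x := [set y in [set: T] | connect_in e [set: T] x y].
apply: leq_trans (subset_leq_card (imsetS compT (subsetT [set~ u]))).
apply: leq_card_imset_coarse.
move=> x y xS yS eqxy; have cxy : connect e x y.
  have : y \in compT y by rewrite !inE; apply: connect0.
  by rewrite -eqxy !inE connect_in_setT.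
have /existsPn/(_ y) := split_none x.
rewrite xS yS cxy /= negbK => cSxy.
apply/setP=> z.
by rewrite !inE /connect_in (same_connect (connect_in_sym _) cSxy).
Qed.

Lemma cutvertex_far_neighbor u v : cutvertex e u ->
  exists x, e u x /\ ~~ connect_in e [set~ u] x v.
Proof.
case/cutvertex_splits=> a [b [aS bS ab nab]].
have [c [d [cS cd ncd ncv]]] : exists c d, [/\ c \in [set~ u], connect e c d,
    ~~ connect_in e [set~ u] c d & ~~ connect_in e [set~ u] c v].
  have [av|nav] := boolP (connect_in e [set~ u] a v); last by exists a, b.
  exists b, a; rewrite (sym_connect_sym se) /connect_in !(connect_in_sym _ b).
  by split=> //; apply: contra nab => /(connect_trans av).
have [x [y [cx ncy exy]]] := connect_exit cd (connect0 _ c) ncd.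
have xS : x \in [set~ u] := connect_in_closed cx cS.
have yu : y = u.
  apply/eqP; apply: contraNT ncy => yu; apply: connect_trans cx _.
  by apply: connect_in_edge; rewrite // !inE.
exists x; split; first by rewrite -yu se.
by apply: contra ncv; apply: connect_trans cx.
Qed.

Lemma separated_nonadj s t x z : e s x -> z != s ->
  connect_in e [set~ s] z t -> ~~ connect_in e [set~ s] x t -> e x z = false.
Proof.
move=> sx zs zt; apply: contraNF => xz; apply: connect_trans zt.
have xs : x != s by rewrite eq_sym adj_neq.
by apply: connect_in_edge; rewrite ?inE.
Qed.

Fixpoint ball s n : {set T} :=
  if n is n'.+1 then ball s n' :|: [set y | [exists x in ball s n', e x y]]
  else [set s].

Lemma ball0 s x : (x \in ball s 0) = (x == s).
Proof. by rewrite inE. Qed.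

Lemma ballS s n x y : x \in ball s n -> e x y -> y \in ball s n.+1.
Proof.
by move=> xn xy; rewrite !inE; apply/orP; right; apply/exists_inP; exists x.
Qed.

Lemma ballP s n y :
  y \in ball s n.+1 -> y \in ball s n \/ exists2 x, x \in ball s n & e x y.
Proof. by rewrite !inE => /orP[|/exists_inP]; [left|right]. Qed.

Lemma ball_mono s m n : m <= n -> {subset ball s m <= ball s n}.
Proof.
move/subnKC <-; elim: (n - m) => [|k IH] x; first by rewrite addn0.
by rewrite addnS inE => /IH ->.
Qed.

Lemma ball1 s y : (y \in ball s 1) = (y == s) || e s y.
Proof.
rewrite !inE; congr (_ || _); apply/existsP/idP => [[x /andP[]]|sy].
  by rewrite inE => /eqP ->.
by exists s; rewrite inE eqxx.
Qed.

Lemma ball_nonadj s n x y :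
  x \in ball s n -> y \notin ball s n.+1 -> e x y = false.
Proof. by move=> xn; apply: contraNF; apply: ballS. Qed.

Lemma ball_pred s n y : y \in ball s n.+2 -> y \notin ball s n.+1 ->
  exists x, [/\ x \in ball s n.+1, x \notin ball s n & e x y].
Proof.
move=> yn2 yn1; have [|[x xn1 xy]] := ballP yn2; first by rewrite (negPf yn1).
by exists x; split=> //; apply: contra yn1 => /ballS; apply.
Qed.

Lemma ball_stable_connect s n : ball s n.+1 \subset ball s n ->
  forall t, connect e s t -> t \in ball s n.
Proof.
move=> /subsetP stable t /connectP[p + ->] {t}.
elim/last_ind: p => [|p y IH] /=.
  by move=> _; apply: (ball_mono (leq0n n)); rewrite ball0.
rewrite rcons_path last_rcons => /andP[/IH xn xy].
exact/stable/(ballS xn xy).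
Qed.

(* The complement of the path 0-1-2-3-4 is the house relabelled by 1 3 0 2 4. *)
Lemma house_in_compl_of_P5 a b c d x :
  e a b -> e b c -> e c d -> e d x ->
  e a c = false -> e a d = false -> e a x = false ->
  e b d = false -> e b x = false -> e c x = false ->
  has_induced house_rel (compl_rel e).
Proof.
move=> ab bc cd dx ac ad ax bd bx cx.
have U : uniq [:: c; a; d; b; x].
  (* identifying any two of the vertices contradicts an edge or a non-edge *)
  rewrite /= !inE !negb_or !andbT;
  repeat (apply/andP; split); apply/eqP => E; subst;
  rewrite ?ie // 1?se in ab bc cd dx ac ad ax bd bx cx *; congruence.
pose g (i : 'I_5) := nth a [:: c; a; d; b; x] i.
have gK i j : (g i == g j) = (i == j) by rewrite /g nth_uniq.
exists g; split=> [i j /eqP|i j]; first by rewrite gK => /eqP.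
rewrite /compl_rel gK /g.
case: i => [[|[|[|[|[|i]]]]] Hi] //; case: j => [[|[|[|[|[|j]]]]] Hj] //=;
rewrite ?(se b a) ?(se c a) ?(se d a) ?(se x a) ?(se c b);
rewrite ?(se d b) ?(se x b) ?(se d c) ?(se x c) ?(se x d);
rewrite ?ab ?bc ?cd ?dx ?ac ?ad ?ax ?bd ?bx ?cx //.
Qed.

(* The complement of the path 0-1-2-3 plus an isolated vertex 4 is the gem
   relabelled by 2 0 3 1 4. *)
Lemma gem_in_compl_of_P4K1 p q r s z :
  e p q -> e q r -> e r s ->
  e p r = false -> e p s = false -> e q s = false ->
  e p z = false -> e q z = false -> e r z = false -> e s z = false ->
  has_induced gem_rel (compl_rel e).
Proof.
move=> pq qr rs pr ps qs pz qz rz sz.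
have U : uniq [:: q; s; p; r; z].
  rewrite /= !inE !negb_or !andbT;
  repeat (apply/andP; split); apply/eqP => E; subst;
  rewrite ?ie // 1?se in pq qr rs pr ps qs pz qz rz sz *; congruence.
pose g (i : 'I_5) := nth p [:: q; s; p; r; z] i.
have gK i j : (g i == g j) = (i == j) by rewrite /g nth_uniq.
exists g; split=> [i j /eqP|i j]; first by rewrite gK => /eqP.
rewrite /compl_rel gK /g.
case: i => [[|[|[|[|[|i]]]]] Hi] //; case: j => [[|[|[|[|[|j]]]]] Hj] //=;
rewrite ?(se q p) ?(se r p) ?(se s p) ?(se z p) ?(se r q);
rewrite ?(se s q) ?(se z q) ?(se s r) ?(se z r) ?(se z s);
rewrite ?pq ?qr ?rs ?pr ?ps ?qs ?pz ?qz ?rz ?sz //.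
Qed.

Lemma house_of_cutvertex_P4 s p q r : cutvertex e s ->
  e s p -> e p q -> e q r -> e s q = false -> e s r = false -> e p r = false ->
  has_induced house_rel (compl_rel e).
Proof.
move=> cs sp pq qr sq sr pr.
have [x [sx nxr]] := cutvertex_far_neighbor r cs.
have ps : p != s by rewrite eq_sym adj_neq.
have qs : q != s by apply: contraTneq qr => ->; rewrite sr.
have rs : r != s by apply: contraTneq qr => ->; rewrite se sq.
have qr_s : connect_in e [set~ s] q r by apply: connect_in_edge; rewrite ?inE.
have pr_s : connect_in e [set~ s] p r.
  by apply: connect_trans qr_s; apply: connect_in_edge; rewrite ?inE.
apply: (house_in_compl_of_P5 (a := x) _ sp pq qr) => //; first by rewrite se.
- exact: separated_nonadj sx ps pr_s nxr.
- exact: separated_nonadj sx qs qr_s nxr.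
- exact: separated_nonadj sx rs (connect0 _ r) nxr.
Qed.

Lemma house_of_nonadj_cutvertices s t : cutvertex e s -> cutvertex e t ->
  s != t -> e s t = false -> connect e s t -> has_induced house_rel (compl_rel e).
Proof.
move=> cs ct st nst cst.
have s0 : s \in ball s 0 by rewrite ball0.
have t1 : t \notin ball s 1 by rewrite ball1 negb_or eq_sym st nst.
have [t2|t2] := boolP (t \in ball s 2).
  have [p [p1 p0 pt]] := ball_pred t2 t1.
  have sp : e s p by move: p1; rewrite ball1 -ball0 (negPf p0).
  have [x [tx nxs]] := cutvertex_far_neighbor s ct.
  have ps_t : connect_in e [set~ t] p s.
    by apply: connect_in_edge; rewrite ?inE 1?se // adj_neq.
  apply: (house_of_cutvertex_P4 cs sp pt tx nst).
    by rewrite se (separated_nonadj tx _ (connect0 _ s) nxs).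
  by rewrite se (separated_nonadj tx _ ps_t nxs) // adj_neq.
have /subsetPn[r r3 r2] : ~~ (ball s 3 \subset ball s 2).
  by apply: contra t2 => /ball_stable_connect; apply.
have [q [q2 q1 qr]] := ball_pred r3 r2.
have [p [p1 p0 pq]] := ball_pred q2 q1.
have sp : e s p by move: p1; rewrite ball1 -ball0 (negPf p0).
apply: (house_of_cutvertex_P4 cs sp pq qr).
- exact: ball_nonadj s0 q1.
- exact: ball_nonadj (ball_mono (leq0n 1) s0) r2.
- exact: ball_nonadj p1 r2.
Qed.

Lemma gem_of_cutvertex_triangle u v w :
  cutvertex e u -> cutvertex e v -> cutvertex e w ->
  e u v -> e v w -> e u w -> has_induced gem_rel (compl_rel e).
Proof.
move=> cu cv cw uv vw uw.
have [xu [uxu nxu]] := cutvertex_far_neighbor v cu.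
have [xv [vxv nxv]] := cutvertex_far_neighbor u cv.
have [xw [wxw nxw]] := cutvertex_far_neighbor u cw.
have uv' := adj_neq uv; have vu : v != u by rewrite eq_sym.
have uw' := adj_neq uw; have wu : w != u by rewrite eq_sym.
have vw' := adj_neq vw; have wv : w != v by rewrite eq_sym.
have vu_w : connect_in e [set~ w] v u.
  by apply: connect_in_edge; rewrite ?inE // se.
have wv_u : connect_in e [set~ u] w v.
  by apply: connect_in_edge; rewrite ?inE // se.
have wu_v : connect_in e [set~ v] w u.
  by apply: connect_in_edge; rewrite ?inE // se.
have xvu : xv != u := disconnected_neq nxv.
have xwu : xw != u := disconnected_neq nxw.
have xwv : xw != v by apply: contraNneq nxw => ->.
apply: (gem_in_compl_of_P4K1 (p := xu) (z := xw) _ uv vxv).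
- by rewrite se.
- exact: separated_nonadj uxu vu (connect0 _ v) nxu.
- apply: (separated_nonadj uxu xvu _ nxu).
  by apply: connect_in_edge; rewrite ?inE // se.
- by rewrite se (separated_nonadj vxv uv' (connect0 _ u) nxv).
- apply: (separated_nonadj uxu xwu _ nxu); apply: connect_trans wv_u.
  by apply: connect_in_edge; rewrite ?inE // se.
- by rewrite se (separated_nonadj wxw uw' (connect0 _ u) nxw).
- by rewrite se (separated_nonadj wxw vw' vu_w nxw).
- apply: (separated_nonadj vxv xwv _ nxv); apply: connect_trans wu_v.
  by apply: connect_in_edge; rewrite ?inE // se.
Qed.
End Graph.

Theorem lemma4 (T : finType) (e : rel T) :
  symmetric e -> irreflexive e ->
  (exists u v w : T,
      [&& u != v, v != w & u != w] /\
      [&& cutvertex e u, cutvertex e v & cutvertex e w] /\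
      connect_in e [set: T] u v /\ connect_in e [set: T] u w) ->
  ~ (distance_hereditary e /\ distance_hereditary (compl_rel e)).
Proof.
move=> se ie [u [v [w [/and3P[uv vw uw] [/and3P[cu cv cw] []]]]]].
rewrite !connect_in_setT => cuv cuw [_ [_ [no_house [_ no_gem]]]].
have cvw : connect e v w.
  by apply: connect_trans cuw; rewrite (sym_connect_sym se).
have house := house_of_nonadj_cutvertices se ie.
case euv: (e u v); last exact: no_house (house _ _ cu cv uv euv cuv).
case evw: (e v w); last exact: no_house (house _ _ cv cw vw evw cvw).
case euw: (e u w); last exact: no_house (house _ _ cu cw uw euw cuw).
exact: no_gem (gem_of_cutvertex_triangle se ie cu cv cw euv evw euw).
Qed.
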